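(* Let $(Q,\rightarrow)$ be a finite transition system, $\mathscr{R}$ a preorder on $Q$ and $\mathscr{P}\subseteq\mathscr{R}$ an equivalence relation. Then the following are equivalent: (i) for all $b,d,d'\in Q$ with $d\,\mathscr{P}\,d'$: $d\in\rightarrow^{-1}(\mathscr{R}(b))\iff d'\in\rightarrow^{-1}(\mathscr{R}(b))$; (ii) $\mathscr{P}\circ\rightarrow_{\mathscr{R}}^{-1}\subseteq\rightarrow^{-1}\circ[\cdot]_{\mathscr{R}}$, i.e. whenever $c\,\mathscr{P}\,d$ and $c\rightarrow_{\mathscr{R}} c'$, there is $d'\in[c']_{\mathscr{R}}$ with $d\rightarrow d'$.
   Context: $\mathscr{R}(X)=\{q'\mid\exists q\in X.\ q\,\mathscr{R}\,q'\}$, $\rightarrow^{-1}(Y)=\{q\mid\exists y\in Y.\ q\rightarrow y\}$, $\mathscr{S}\circ\mathscr{R}=\{(x,y)\mid\exists z.\ x\,\mathscr{R}\,z\wedge z\,\mathscr{S}\,y\}$. A preorder is a reflexive transitive relation; $[q]_{\mathscr{R}}=\{q'\mid q\,\mathscr{R}\,q'\wedge q'\,\mathscr{R}\,q\}$ and $[\cdot]_{\mathscr{R}}=\bigcup_{q\in Q}\{q\}\times[q]_{\mathscr{R}}$. A transition $q\rightarrow q'$ is $\mathscr{R}$-maximal, $q\rightarrow_{\mathscr{R}}q'$, if for all $q''$, ($q\rightarrow q''$ and $q'\,\mathscr{R}\,q''$) implies $q''\in[q']_{\mathscr{R}}$. *)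

(* a finite transition system is a finType Q with a
   boolean transition relation (trans : rel Q). *)
From mathcomp Require Import all_boot.
Set Implicit Arguments. Unset Strict Implicit. Unset Printing Implicit Defensive.

Section Defs.
Variable Q : finType.

Definition rimage (R : rel Q) (X : Q -> Prop) : Q -> Prop :=
  fun q' => exists q, X q /\ R q q'.

Definition rpreimage (T : rel Q) (Y : Q -> Prop) : Q -> Prop :=
  fun q => exists y, Y y /\ T q y.

Definition rclass (R : rel Q) (q : Q) : Q -> Prop :=
  fun q' => R q q' /\ R q' q.

Definition is_preorder (R : rel Q) : Prop := reflexive R /\ transitive R.

Definition is_equivalence (P : rel Q) : Prop :=
  [/\ reflexive P, symmetric P & transitive P].

Definition maxtrans (T R : rel Q) (q q' : Q) : Prop :=
  T q q' /\ forall q'', T q q'' -> R q' q'' -> rclass R q' q''.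
End Defs.

(* Both directions rest on the observation that d can reach the upward
   R-closure of b iff d -> y for some y above b.  For (i) => (ii), a maximal
   transition c -> c' is matched by some d -> y with y above c', which (i)
   matches back by some c -> z with z above y; maximality of c -> c' puts z,
   hence y, in the class of c'.  For (ii) => (i), finiteness lets every
   transition c -> y be dominated by a maximal one c -> z, and (ii) transfers
   it to some d -> d' with d' equivalent to z, so d' is still above b. *)
From mathcomp Require Import all_boot.

Set Implicit Arguments.
Unset Strict Implicit.
Unset Printing Implicit Defensive.

Section TransitionSystem.

Variables (Q : finType) (T R : rel Q).
Hypotheses (R_refl : reflexive R) (R_trans : transitive R).
Arguments R_trans {y x z}.

(* A candidate maximising the number of elements below it cannot be strictly
   below another candidate. *)
Lemma preorder_maximal_above (A : pred Q) (z : Q) : A z ->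
  exists z', [/\ A z', R z z' & forall u, A u -> R z' u -> R u z'].
Proof.
move=> Az.
have Cz : [pred u | A u && R z u] z by rewrite /= Az R_refl.
case: (arg_maxnP (fun u => #|[pred v | R v u]|) Cz) => z' /andP[Az' Rzz'] maxz'.
exists z'; split=> // u Au Rz'u; apply/contraT => Ruz'.
have /= := maxz' u; rewrite Au (R_trans Rzz' Rz'u) => /(_ isT).
rewrite leqNgt => /negP[]; apply/proper_card/properP; split.
- by apply/subsetP => v; rewrite !inE => Rvz'; apply: R_trans Rvz' Rz'u.
- by exists u; rewrite !inE ?R_refl.
Qed.

Lemma maxtrans_above (d z : Q) : T d z -> exists2 z', R z z' & maxtrans T R d z'.
Proof.
move=> Tdz; have [z' [Tdz' Rzz' maxz']] := preorder_maximal_above Tdz.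
by exists z' => //; split=> // u Tdu Rz'u; split=> //; apply: maxz'.
Qed.

Lemma rpreimage_rimage1 (b d : Q) :
  rpreimage T (rimage R (fun x => x = b)) d <-> exists2 y, R b y & T d y.
Proof.
split; first by move=> [y [[_ [-> Rby]] Tdy]]; exists y.
by move=> [y Rby Tdy]; exists y; split=> //; exists b.
Qed.

Lemma maxtrans_transfer (c d : Q) :
  (forall b, rpreimage T (rimage R (fun x => x = b)) c <->
             rpreimage T (rimage R (fun x => x = b)) d) ->
  forall c', maxtrans T R c c' -> exists d', rclass R c' d' /\ T d d'.
Proof.
move=> pre_cd c' [Tcc' maxc'].
have /pre_cd/rpreimage_rimage1[y Rc'y Tdy] : rpreimage T (rimage R (fun x => x = c')) c.
  by apply/rpreimage_rimage1; exists c'.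
have /pre_cd/rpreimage_rimage1[z Ryz Tcz] : rpreimage T (rimage R (fun x => x = y)) d.
  by apply/rpreimage_rimage1; exists y.
have [_ Rzc'] := maxc' z Tcz (R_trans Rc'y Ryz).
by exists y; split=> //; split=> //; apply: R_trans Ryz Rzc'.
Qed.

Lemma rpreimage_transfer (c d : Q) :
  (forall c', maxtrans T R c c' -> exists d', rclass R c' d' /\ T d d') ->
  forall b, rpreimage T (rimage R (fun x => x = b)) c ->
            rpreimage T (rimage R (fun x => x = b)) d.
Proof.
move=> sim_cd b /rpreimage_rimage1[y Rby Tcy].
have [z Ryz /sim_cd[d' [[Rzd' _] Tdd']]] := maxtrans_above Tcy.
by apply/rpreimage_rimage1; exists d' => //; apply: R_trans (R_trans Rby Ryz) Rzd'.
Qed.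

End TransitionSystem.

Theorem lemma5 (Q : finType) (T R P : rel Q) :
  is_preorder R -> is_equivalence P -> subrel P R ->
  ((forall b d d' : Q, P d d' ->
      (rpreimage T (rimage R (fun x => x = b)) d <->
       rpreimage T (rimage R (fun x => x = b)) d'))
   <->
   (forall c c' d : Q, P c d -> maxtrans T R c c' ->
      exists d', rclass R c' d' /\ T d d')).
Proof.
move=> [R_refl R_trans] [_ P_sym _] _; split=> H.
- by move=> c c' d Pcd; apply: maxtrans_transfer => // b; apply: H.
- move=> b d d' Pdd'; split; apply: rpreimage_transfer => // c'.
  + exact: H Pdd'.
  + by apply: H; rewrite P_sym.
Qed.
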